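(* Let $v\in\mathcal{K}\setminus\mathcal{Y}_{\mu_1}$ and $w\in C_v^+\cap\mathcal{K}$ with $w\ne v$. Then $f_0$ decreases along the segment from $w$ to $v$: the function $t\mapsto f_0(w+t(v-w))$ is strictly decreasing on $[0,1]$.
   Context: $\mathcal{K}\subset\mathbb{R}^q$ is an open, bounded, convex set with $0\in\mathcal{K}$. $f:\mathcal{K}\to\mathbb{R}$ is $C^2$ with $D^2f\ge -MI_q$ ($M\ge0$) and $f(v)\to\infty$ as $v\to\partial\mathcal{K}$, $v\in\mathcal{K}$; set $f_0(v)=f(v)+\frac M2|v|^2$ (convex on $\mathcal{K}$). Let $g:\mathbb{S}^{q-1}\to(0,\infty)$ be the Lipschitz function such that $\nu\mapsto g(\nu)\nu$ parametrizes $\partial\mathcal{K}$. Define $G(x)=g(x/|x|)x$ for $x\ne0$, $G(0)=0$, on $\overline{B_1(0)}$, and $\mathcal{Y}_\mu=G(B_\mu(0))$ for $0<\mu<1$. Fix $r_0>0$ and $0<\mu_0<1$ with $\overline{B_{r_0}(0)}\subset\mathcal{Y}_{\mu_0}$. Let $s_0=\max\{f_0(v):v\in\partial B_{r_0}(0)\}$ and fix $\mu_1\in(\mu_0,1)$ such that $f_0(v)\ge 1+s_0$ for all $v\in\mathcal{K}\setminus\mathcal{Y}_{\mu_1}$. Cones: for $v\in\mathcal{K}\setminus\overline{B_{r_0}(0)}$, $C_v^-$ is the closed (solid) half-cone with vertex $v$, axis the ray from $v$ through $0$, and half-aperture $\alpha(v)\in(0,\pi/2)$ with $\sin\alpha(v)=r_0/|v|$;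 $C_v^+=\{v+\xi:\ v-\xi\in C_v^-\}$ is its reflection through $v$. *)

From HB Require Import structures.
From mathcomp Require Import all_boot all_order all_algebra.
From mathcomp Require Import all_classical all_reals all_analysis.
Set Implicit Arguments. Unset Strict Implicit. Unset Printing Implicit Defensive.
Import Order.TTheory GRing.Theory Num.Theory.
Import numFieldNormedType.Exports.
Local Open Scope classical_set_scope.
Local Open Scope ring_scope.

Section Defs.
Variables (R : realType) (q : nat).
Notation V := 'rV[R]_q.

Definition dotq (u w : V) : R := \sum_(i < q) u ord0 i * w ord0 i.
Definition enorm (u : V) : R := Num.sqrt (dotq u u).

Definition eopen (K : set V) : Prop :=
  forall x, K x -> exists2 e : R, 0 < e & forall y, enorm (y - x) < e -> K y.
Definition ebounded (K : set V) : Prop :=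
  exists C : R, forall x, K x -> enorm x <= C.
Definition econvex (K : set V) : Prop :=
  forall x y (t : R), K x -> K y -> 0 <= t <= 1 -> K ((1 - t) *: x + t *: y).

(* topological boundary of K (closure minus interior; K is open) *)
Definition ebdry (K : set V) : set V :=
  [set p | ~ K p /\ forall e : R, 0 < e -> exists x, K x /\ enorm (x - p) < e].

Definition blows_up_at_bdry (K : set V) (f : V -> R) : Prop :=
  forall p, ebdry K p -> forall B : R, exists2 d : R, 0 < d &
    forall v, K v -> enorm (v - p) < d -> B < f v.

Definition C2_on (K : set V) (f : V -> R) : Prop :=
  forall x, K x ->
    {for x, continuous f} /\
    forall e1 e2 : V,
      derivable f x e1 /\ {for x, continuous ('D_e1 f)} /\
      derivable ('D_e1 f) x e2 /\ {for x, continuous ('D_e2 ('D_e1 f))}.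

(* D^2 f >= - M I on K:  <D^2 f(x) e, e> >= - M |e|^2 *)
Definition hess_ge (K : set V) (f : V -> R) (M : R) : Prop :=
  forall x, K x -> forall e : V, - M * enorm e ^+ 2 <= 'D_e ('D_e f) x.

Definition f0 (f : V -> R) (M : R) (v : V) : R := f v + M / 2 * enorm v ^+ 2.

Definition sphere1 : set V := [set nu | enorm nu = 1].

Definition radial_param (K : set V) (g : V -> R) : Prop :=
  (forall nu, sphere1 nu -> 0 < g nu) /\
  (exists L : R, forall nu1 nu2, sphere1 nu1 -> sphere1 nu2 ->
      `|g nu1 - g nu2| <= L * enorm (nu1 - nu2)) /\
  ebdry K = [set g nu *: nu | nu in sphere1].

Definition Gmap (g : V -> R) (x : V) : V :=
  if x == 0 then 0 else g ((enorm x)^-1 *: x) *: x.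

Definition Yset (g : V -> R) (mu : R) : set V :=
  [set Gmap g x | x in [set x | enorm x < mu]].

(* C_v^- : closed solid half-cone, vertex v, axis the ray from v through 0,
   half-aperture alpha with sin alpha = r0/|v|, i.e.
   cos alpha = sqrt(1 - (r0/|v|)^2);  x in C_v^- iff x = v or the angle
   between x - v and -v is <= alpha. *)
Definition cone_minus (r0 : R) (v : V) : set V :=
  [set x | enorm (x - v) * enorm v * Num.sqrt (1 - (r0 / enorm v) ^+ 2)
             <= dotq (x - v) (- v)].

Definition cone_plus (r0 : R) (v : V) : set V :=
  [set w | cone_minus r0 v (v - (w - v))].

End Defs.

From HB Require Import structures.
From mathcomp Require Import all_boot all_order all_algebra.
From mathcomp Require Import all_classical all_reals all_analysis.
From mathcomp Require Import ring lra.
Import Order.TTheory GRing.Theory Num.Theory.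
Import numFieldNormedType.Exports.
Local Open Scope classical_set_scope.
Local Open Scope ring_scope.

(* Since [w] lies in the reflected cone [C_v^+], the direction [v - w] makes an
   angle at most [alpha(v)] with [-v], so the ray from [w] through [v] goes on to
   meet the sphere [|u| = r0], which [v] lies outside of, at some
   [u = w + T (v - w)] with [T > 1].  The segment [[w, u]] lies in [K] by
   convexity, and on it [f0] is convex because [D^2 f0 = D^2 f + M I >= 0].
   As [f0 u <= s0 < 1 + s0 <= f0 v], the slope of [f0] along the segment is
   negative somewhere in [[1, T]], hence everywhere on [[0, 1]]. *)

Section RealFunctions.
Context {R : realType}.
Implicit Types (a b c s t : R) (psi dpsi : R -> R).

Lemma is_derive_quadratic a b c t :
  is_derive t 1 (fun s : R => a + b * s + c * s ^+ 2) (b + 2 * c * t).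
Proof.
pose p : {poly R} := a%:P + b *: 'X + c *: 'X^2.
have -> : (fun s : R => a + b * s + c * s ^+ 2) = horner p.
  by apply/funext => s; rewrite /p !hornerE.
by apply: is_derive_eq; rewrite /p !poly.derivE !hornerE /=; ring.
Qed.

Lemma quadratic_pos_root a b c :
  0 < a -> 0 < c -> b < 0 -> 4 * a * c <= b ^+ 2 ->
  exists2 x, 0 < x & a * x ^+ 2 + b * x + c = 0.
Proof.
move=> a0 c0 b0 disc; set S := Num.sqrt (b ^+ 2 - 4 * a * c).
have S2 : S ^+ 2 = b ^+ 2 - 4 * a * c by rewrite sqr_sqrtr // subr_ge0.
have S0 : 0 <= S by exact: sqrtr_ge0.
have bS : 0 < - b - S by nra.
exists ((- b - S) / (2 * a)); first by rewrite divr_gt0 ?mulr_gt0.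
rewrite (_ : _ + c = (S ^+ 2 - b ^+ 2 + 4 * a * c) / (4 * a)); last first.
  by field; rewrite gt_eqF.
have -> : S ^+ 2 - b ^+ 2 + 4 * a * c = 0 by rewrite S2; ring.
by rewrite mul0r.
Qed.

Lemma MVT_closed psi dpsi a b : a <= b ->
  (forall x, a <= x <= b -> is_derive x 1 psi (dpsi x)) ->
  exists2 c, a <= c <= b & psi b - psi a = dpsi c * (b - a).
Proof.
move=> ab dpsiP.
have der x : x \in `]a, b[ -> is_derive x 1 psi (dpsi x).
  by rewrite in_itv /= => /andP[ax xb]; apply: dpsiP; rewrite !ltW.
have cont : {within `[a, b], continuous psi}.
  apply: derivable_within_continuous => x; rewrite in_itv /= => /dpsiP.
  by case.
by have [c] := MVT_segment ab der cont; rewrite in_itv /=; exists c.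
Qed.
Arguments MVT_closed {psi dpsi a b}.

Lemma derive_ge0_ndecr psi dpsi a b :
  (forall x, a <= x <= b -> is_derive x 1 psi (dpsi x)) ->
  (forall x, a <= x <= b -> 0 <= dpsi x) ->
  forall x y, a <= x -> x <= y -> y <= b -> psi x <= psi y.
Proof.
move=> dpsiP dpsi_ge0 x y ax xy yb.
have inab z : x <= z <= y -> a <= z <= b.
  by case/andP => xz zy; apply/andP; split; lra.
have [c cxy E] := MVT_closed xy (fun z hz => dpsiP z (inab z hz)).
by rewrite -subr_ge0 E mulr_ge0 ?subr_ge0 ?dpsi_ge0 ?inab.
Qed.

Lemma ndecr_derive_decr psi dpsi a b c :
  (forall x, a <= x <= c -> is_derive x 1 psi (dpsi x)) ->
  (forall x y, a <= x -> x <= y -> y <= c -> dpsi x <= dpsi y) ->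
  b < c -> psi c < psi b ->
  forall s t, a <= s -> s < t -> t <= b -> psi t < psi s.
Proof.
move=> dpsiP dpsi_ndecr bc psi_cb s t le_as st tb.
have inac x y z : a <= x -> y <= c -> x <= z <= y -> a <= z <= c.
  by move=> ax yc /andP[xz zy]; apply/andP; split; lra.
have ab : a <= b by lra.
have tc : t <= c by lra.
have [c1 /andP[bc1 c1c] E1] :=
  MVT_closed (ltW bc) (fun z => dpsiP z \o inac b c z ab (lexx c)).
have dpsi_c1 : dpsi c1 < 0.
  by rewrite -(pmulr_llt0 _ (_ : 0 < c - b)) ?subr_gt0 // -E1; lra.
have [xi /andP[sxi xit] E2] :=
  MVT_closed (ltW st) (fun z => dpsiP z \o inac s t z le_as tc).
have : dpsi xi <= dpsi c1 by apply: dpsi_ndecr; lra.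
have : 0 < t - s by rewrite subr_gt0.
nra.
Qed.

End RealFunctions.

Section Euclidean.
Context {R : realType} {q : nat}.
Notation V := 'rV[R]_q.
Implicit Types (x y z : V) (K : set V).

Lemma dotqC x y : dotq x y = dotq y x.
Proof. by apply: eq_bigr => i _; rewrite mulrC. Qed.

Lemma dotqDl x y z : dotq (x + y) z = dotq x z + dotq y z.
Proof. by rewrite /dotq -big_split; apply: eq_bigr => i _; rewrite mxE mulrDl. Qed.

Lemma dotqZl (c : R) x y : dotq (c *: x) y = c * dotq x y.
Proof. by rewrite /dotq mulr_sumr; apply: eq_bigr => i _; rewrite mxE mulrA. Qed.

Lemma dotqDr x y z : dotq x (y + z) = dotq x y + dotq x z.
Proof. by rewrite dotqC dotqDl !(dotqC x). Qed.

Lemma dotqZr (c : R) x y : dotq x (c *: y) = c * dotq x y.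
Proof. by rewrite dotqC dotqZl dotqC. Qed.

Lemma dotqNr x y : dotq x (- y) = - dotq x y.
Proof. by rewrite -scaleN1r dotqZr mulN1r. Qed.

Lemma dotq_ge0 x : 0 <= dotq x x.
Proof. by apply: sumr_ge0 => i _; rewrite -expr2 sqr_ge0. Qed.

Lemma dotq_eq0 x : (dotq x x == 0) = (x == 0).
Proof.
apply/idP/eqP => [|->]; last by rewrite /dotq big1 // => i _; rewrite mxE mul0r.
rewrite psumr_eq0 => [/allP x0|i _]; last by rewrite -expr2 sqr_ge0.
apply/matrixP => i j; rewrite mxE (ord1 i).
by have := x0 j (mem_index_enum j); rewrite -expr2 sqrf_eq0 => /eqP.
Qed.

Lemma dotq_line x d (s : R) :
  dotq (x + s *: d) (x + s *: d) = dotq x x + 2 * dotq x d * s + dotq d d * s ^+ 2.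
Proof. by rewrite dotqDl !dotqDr !dotqZl !dotqZr (dotqC d x); ring. Qed.

Lemma enorm_ge0 x : 0 <= enorm x.
Proof. exact: sqrtr_ge0. Qed.

Lemma enorm_sqr x : enorm x ^+ 2 = dotq x x.
Proof. by rewrite sqr_sqrtr // dotq_ge0. Qed.

Lemma enorm_eq0 x : (enorm x == 0) = (x == 0).
Proof. by rewrite sqrtr_eq0 le_eqVlt ltNge dotq_ge0 orbF dotq_eq0. Qed.

Lemma enormZ (c : R) x : enorm (c *: x) = `|c| * enorm x.
Proof. by rewrite /enorm dotqZl dotqZr mulrA -expr2 sqrtrM ?sqr_ge0 // sqrtr_sqr. Qed.

Lemma enormN x : enorm (- x) = enorm x.
Proof. by rewrite -scaleN1r enormZ normrN normr1 mul1r. Qed.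

End Euclidean.

Section Geometry.
Context {R : realType} {q : nat}.
Notation V := 'rV[R]_q.
Implicit Types (x y v w d : V) (K : set V).

Lemma econvex_segment K x d (T r : R) : econvex K -> K x -> K (x + T *: d) ->
  0 < T -> 0 <= r <= T -> K (x + r *: d).
Proof.
move=> Kc Kx KT T0 /andP[r0 rT].
have rT1 : 0 <= r / T <= 1 by rewrite divr_ge0 ?(ltW T0) //= ler_pdivrMr // mul1r.
have := Kc _ _ _ Kx KT rT1.
by rewrite scalerDr scalerA divfK ?gt_eqF // addrA -scalerDl subrK scale1r.
Qed.

Lemma scale_adherent_in K p (l : R) : eopen K -> econvex K -> K 0 ->
  (forall e : R, 0 < e -> exists y, K y /\ enorm (y - p) < e) ->
  0 < l < 1 -> K (l *: p).
Proof.
move=> Ko Kc K0 p_adh /andP[l0 l1].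
have l1' : 0 < 1 - l by rewrite subr_gt0.
have [rho rho0 ballK] := Ko 0 K0.
have e0 : 0 < rho * (1 - l) / l by rewrite divr_gt0 ?mulr_gt0.
have [y [Ky yp]] := p_adh _ e0.
set m := (l / (1 - l)) *: (p - y).
have Km : K m.
  apply: ballK; rewrite subr0 enormZ ger0_norm ?divr_ge0 ?ltW //.
  rewrite -[p - y]opprB enormN.
  by rewrite mulrC -ltr_pdivlMr ?divr_gt0 // invf_div mulrA.
have := Kc _ _ l Km Ky; rewrite !ltW //= => /(_ isT).
by rewrite /m scalerA mulrC divfK ?gt_eqF // scalerBr subrK.
Qed.
Arguments scale_adherent_in {K p l}.

Lemma Yset_sub K g (mu : R) : eopen K -> econvex K -> K 0 ->
  radial_param K g -> mu <= 1 -> Yset g mu `<=` K.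
Proof.
move=> Ko Kc K0 [_ [_ bdryK]] mu1 _ [x /= xmu <-]; rewrite /Gmap.
have [//|x0] := eqVneq x 0.
have lx0 : 0 < enorm x by rewrite lt_def enorm_eq0 x0 enorm_ge0.
set nu := (enorm x)^-1 *: x.
have nu1 : sphere1 nu.
  by rewrite /sphere1 /= enormZ ger0_norm ?invr_ge0 ?enorm_ge0 // mulVf ?gt_eqF.
have [_ p_adh] : ebdry K (g nu *: nu) by rewrite bdryK; exists nu.
have -> : g nu *: x = enorm x *: (g nu *: nu).
  by rewrite /nu !scalerA mulrAC mulfV ?gt_eqF ?mul1r.
apply: (scale_adherent_in Ko Kc K0 p_adh).
by rewrite lx0 (lt_le_trans xmu mu1).
Qed.

Lemma cone_plus_dotq (r0 : R) v w : v != 0 -> cone_plus r0 v w ->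
  enorm (v - w) * Num.sqrt (dotq v v - r0 ^+ 2) <= - dotq v (v - w).
Proof.
move=> v0; rewrite /cone_plus /cone_minus /= (addrAC v) subrr add0r opprB.
rewrite dotqNr dotqC -mulrA; congr (_ * _ <= _).
have nv0 : enorm v != 0 by rewrite enorm_eq0.
have ev : enorm v = Num.sqrt (enorm v ^+ 2) by rewrite sqrtr_sqr ger0_norm ?enorm_ge0.
rewrite {1}ev -sqrtrM ?sqr_ge0 // -enorm_sqr; congr Num.sqrt; field; exact: nv0.
Qed.
Arguments cone_plus_dotq {r0 v w}.

Lemma cone_plus_ray_meets_sphere (r0 : R) v w : 0 <= r0 -> r0 < enorm v ->
  cone_plus r0 v w -> w != v -> exists2 s, 0 < s & enorm (v + s *: (v - w)) = r0.
Proof.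
move=> r0_ge0 r0v cone wv.
have v0 : v != 0 by rewrite -enorm_eq0 gt_eqF // (le_lt_trans r0_ge0).
have := cone_plus_dotq v0 cone; set d := v - w => {}cone.
have d0 : 0 < dotq d d by rewrite lt_def dotq_eq0 subr_eq0 eq_sym wv dotq_ge0.
have vr : 0 < dotq v v - r0 ^+ 2.
  by rewrite subr_gt0 -enorm_sqr ltr_pXn2r ?nnegrE ?enorm_ge0.
have P0 : 0 < enorm d * Num.sqrt (dotq v v - r0 ^+ 2).
  by rewrite mulr_gt0 ?sqrtr_gt0 // lt_def enorm_eq0 -dotq_eq0 gt_eqF ?enorm_ge0.
have P2 : (enorm d * Num.sqrt (dotq v v - r0 ^+ 2)) ^+ 2 =
          dotq d d * (dotq v v - r0 ^+ 2) by rewrite exprMn enorm_sqr sqr_sqrtr ?ltW.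
have [s s0 root] : exists2 s, 0 < s &
    dotq d d * s ^+ 2 + 2 * dotq v d * s + (dotq v v - r0 ^+ 2) = 0.
  by apply: quadratic_pos_root => //; nra.
exists s => //; rewrite /enorm dotq_line.
have -> : dotq v v + 2 * dotq v d * s + dotq d d * s ^+ 2 = r0 ^+ 2 by lra.
by rewrite sqrtr_sqr ger0_norm.
Qed.

End Geometry.
Arguments econvex_segment {R q K x d T r}.
Arguments Yset_sub {R q K g mu}.
Arguments cone_plus_ray_meets_sphere {R q r0 v w}.

Section DerivativesAlongLines.
Context {R : realType} {q : nat}.
Notation V := 'rV[R]_q.
Implicit Types (x d : V) (t : R).

Lemma is_derive_line (F : V -> R) x d t : derivable F (x + t *: d) d ->
  is_derive t 1 (fun s => F (x + s *: d)) ('D_d F (x + t *: d)).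
Proof.
have quotE : (fun h : R => h^-1 *: (((fun s => F (x + s *: d)) \o shift t) (h *: 1)
                 - F (x + t *: d))) =
             (fun h : R => h^-1 *: ((F \o shift (x + t *: d)) (h *: d) - F (x + t *: d))).
  apply/funext => h /=; congr (_ *: (F _ - _)).
  by rewrite [h *: 1]mulr1 scalerDl addrCA addrC.
by move=> Fd; apply: DeriveDef; rewrite /derivable /derive quotE.
Qed.
Arguments is_derive_line {F x d t}.

Variables (K : set V) (f : V -> R) (M : R).
Hypothesis f_C2 : C2_on K f.

Lemma is_derive_f0_line x d t : K (x + t *: d) ->
  is_derive t 1 (fun s => f0 f M (x + s *: d))
    ('D_d f (x + t *: d) + M * dotq (x + t *: d) d).
Proof.
move=> Kx; have [_ /(_ d d) [fd _]] := f_C2 _ Kx.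
have -> : (fun s => f0 f M (x + s *: d)) = (fun s => f (x + s *: d)) +
    (fun s => M / 2 * dotq x x + M * dotq x d * s + M / 2 * dotq d d * s ^+ 2).
  by apply/funext => s; rewrite /f0 !fctE enorm_sqr dotq_line; field.
apply: is_derive_eq (is_deriveD (is_derive_line fd) (is_derive_quadratic _ _ _ t)) _.
by rewrite dotqDl dotqZl; field.
Qed.

Lemma is_derive_f0_line_slope x d t : K (x + t *: d) ->
  is_derive t 1 (fun s => 'D_d f (x + s *: d) + M * dotq (x + s *: d) d)
    ('D_d ('D_d f) (x + t *: d) + M * dotq d d).
Proof.
move=> Kx; have [_ /(_ d d) [_ [_ [fdd _]]]] := f_C2 _ Kx.
have -> : (fun s => 'D_d f (x + s *: d) + M * dotq (x + s *: d) d) =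
    (fun s => 'D_d f (x + s *: d)) + (fun s => M * dotq x d + M * dotq d d * s + 0 * s ^+ 2).
  by apply/funext => s; rewrite !fctE dotqDl dotqZl; ring.
apply: is_derive_eq (is_deriveD (is_derive_line fdd) (is_derive_quadratic _ _ _ t)) _.
by ring.
Qed.

Hypothesis f_hess : hess_ge K f M.

Lemma f0_line_decr x d (b c : R) : (forall r, 0 <= r <= c -> K (x + r *: d)) ->
  b < c -> f0 f M (x + c *: d) < f0 f M (x + b *: d) ->
  forall s t, 0 <= s -> s < t -> t <= b -> f0 f M (x + t *: d) < f0 f M (x + s *: d).
Proof.
move=> Kseg bc; apply: ndecr_derive_decr bc => [r /Kseg|]; first exact: is_derive_f0_line.
apply: derive_ge0_ndecr => r /Kseg Kr; first exact: is_derive_f0_line_slope.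
by have := f_hess _ Kr d; rewrite enorm_sqr; lra.
Qed.

End DerivativesAlongLines.
Arguments f0_line_decr {R q K f M} f_C2 f_hess {x d} b c.

Theorem corollary2p5 (R : realType) (q : nat)
  (K : set 'rV[R]_q) (f : 'rV[R]_q -> R) (M : R) (g : 'rV[R]_q -> R)
  (r0 mu0 mu1 s0 : R) (v w : 'rV[R]_q) :
  eopen K -> ebounded K -> econvex K -> K 0 ->
  C2_on K f -> 0 <= M -> hess_ge K f M -> blows_up_at_bdry K f ->
  radial_param K g ->
  0 < r0 -> 0 < mu0 < 1 ->
  [set x | enorm x <= r0] `<=` Yset g mu0 ->
  (exists2 u, enorm u = r0 & f0 f M u = s0) ->
  (forall u, enorm u = r0 -> f0 f M u <= s0) ->
  mu0 < mu1 < 1 ->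
  (forall u, K u -> ~ Yset g mu1 u -> 1 + s0 <= f0 f M u) ->
  K v -> ~ Yset g mu1 v ->
  cone_plus r0 v w -> K w -> w != v ->
  forall s t : R, 0 <= s -> s < t -> t <= 1 ->
    f0 f M (w + t *: (v - w)) < f0 f M (w + s *: (v - w)).
Proof.
move=> Ko _ Kc K0 f_C2 _ f_hess _ g_rad r0_gt0 /andP[_ mu0_lt1] ballY _ f0_sphere
  /andP[mu01 _] f0_out Kv vY cone Kw wv.
have r0v : r0 < enorm v.
  rewrite ltNge; apply/negP => /ballY [x xmu0 xv]; apply: vY.
  by exists x => //; apply: lt_trans mu01.
have [s1 s1_gt0 u_sphere] := cone_plus_ray_meets_sphere (ltW r0_gt0) r0v cone wv.
have uE : w + (1 + s1) *: (v - w) = v + s1 *: (v - w).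
  by rewrite scalerDl scale1r addrA [w + _]addrC subrK.
have Ku : K (w + (1 + s1) *: (v - w)).
  rewrite uE; apply: (Yset_sub Ko Kc K0 g_rad (ltW mu0_lt1)).
  by apply: ballY; rewrite /= u_sphere.
apply: (f0_line_decr f_C2 f_hess 1 (1 + s1)).
- by move=> r; apply: econvex_segment Kc Kw Ku (addr_gt0 ltr01 s1_gt0).
- by rewrite ltrDl.
- have vE : w + 1 *: (v - w) = v by rewrite scale1r addrC subrK.
  have := f0_out v Kv vY; have := f0_sphere _ u_sphere.
  by rewrite -uE vE; lra.
Qed.
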